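(* Let $\Omega\subset B(\mathcal H)^d$ be an NC domain and $f:\Omega\to B(\mathcal H)^r$ an NC function. If $x,y\in\Omega$ and $L\in B(\mathcal H)$ satisfy $Lx=yL$, then $Lf(x)=f(y)L$.
   Context: Throughout, $\mathcal H$ is an infinite-dimensional separable complex Hilbert space, $B(\mathcal H)$ the bounded operators with the operator norm, and $\mathcal H^{(l)}$ ($l\in\mathbb N\cup\{\infty\}$) the direct sum of $l$ copies of $\mathcal H$. $B(\mathcal H)^d$ has the norm $\|x\|=\max_i\|x^i\|$. Operations on tuples are componentwise: for $L\in B(\mathcal H)$, $Lx=(Lx^1,\dots,Lx^d)$ and $xL=(x^1L,\dots,x^dL)$; for bounded invertible linear $s:\mathcal H\to\mathcal H^{(l)}$ and $z\in B(\mathcal H^{(l)})^d$, $s^{-1}zs=(s^{-1}z^1s,\dots,s^{-1}z^ds)$; for a finite or countable uniformly bounded sequence $x_1,x_2,\dots$ in $B(\mathcal H)^d$ of length $l$, $\bigoplus_n x_n\in B(\mathcal H^{(l)})^d$ has $i$-th entry $\bigoplus_n x_n^i$; block matrices of tuples are defined entrywise per coordinate. A set is unitarily invariant if $u^*xu$ lies in it for each of its elements $x$ and each unitary $u\in B(\mathcal H)$. NC domain: $\Omega\subset B(\mathcal H)^d$ is an NC domain if there are subsets $\Omega_1,\Omega_2,\dots$ of $\Omega$ with (1) $\Omega_k\subset\mathrm{int}\,\Omega_{k+1}$ (norm interior) and $\Omega=\bigcup_k\Omega_k$; (2) each $\Omega_k$ norm-bounded and unitarily invariant; (3) for every sequence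 $x_1,x_2,\dots$ in $\Omega_k$ of length $l\in\mathbb N\cup\{\infty\}$ there is a unitary $u:\mathcal H\to\mathcal H^{(l)}$ with $u^{-1}(\bigoplus_n x_n)u\in\Omega_k$. NC function: $f:\Omega\to B(\mathcal H)^r$ on an NC domain is NC if whenever $x,y\in\Omega$ and $s:\mathcal H\to\mathcal H^{(2)}$ is bounded, linear, invertible with $s^{-1}\begin{bmatrix}x&0\\0&y\end{bmatrix}s\in\Omega$, then $f\Big(s^{-1}\begin{bmatrix}x&0\\0&y\end{bmatrix}s\Big)=s^{-1}\begin{bmatrix}f(x)&0\\0&f(y)\end{bmatrix}s$. *)

(* classical reals. Concrete model H = l^2(N; C). *)
From Stdlib Require Import Reals List.
From Stdlib Require Fin.
Open Scope R_scope.

Definition C := (R * R)%type.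
Definition Cadd (a b : C) : C := (fst a + fst b, snd a + snd b).
Definition Csub (a b : C) : C := (fst a - fst b, snd a - snd b).
Definition Cmul (a b : C) : C :=
  (fst a * fst b - snd a * snd b, fst a * snd b + snd a * fst b).
Definition Cnorm2 (a : C) : R := fst a * fst a + snd a * snd a.

Definition vadd {J : Type} (v w : J -> C) : J -> C := fun j => Cadd (v j) (w j).
Definition vscal {J : Type} (a : C) (v : J -> C) : J -> C := fun j => Cmul a (v j).

Fixpoint sumsq {J : Type} (v : J -> C) (s : list J) : R :=
  match s with nil => 0 | j :: s' => Cnorm2 (v j) + sumsq v s' end.

(* nrm2_le v c  <->  ||v||^2 <= c  (sup over finite sets of indices) *)
Definition nrm2_le {J : Type} (v : J -> C) (c : R) : Prop :=
  forall s : list J, NoDup s -> sumsq v s <= c.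

Definition l2 {J : Type} (v : J -> C) : Prop := exists c, nrm2_le v c.

(* square-summable vectors supported in supp (models a closed subspace
   such as H^(l) inside l^2(N x N)) *)
Definition l2_in {J : Type} (supp : J -> Prop) (w : J -> C) : Prop :=
  l2 w /\ forall j, ~ supp j -> w j = (0, 0).

Definition linear_on {J1 J2 : Type} (T : (J1 -> C) -> (J2 -> C)) : Prop :=
  forall a b v w, l2 v -> l2 w -> forall j,
    T (vadd (vscal a v) (vscal b w)) j = Cadd (Cmul a (T v j)) (Cmul b (T w j)).

Definition op_bound {J1 J2 : Type} (T : (J1 -> C) -> (J2 -> C)) (M : R) : Prop :=
  0 <= M /\ forall v c, nrm2_le v c -> nrm2_le (T v) (M * M * c).

(* A bounded operator, normalized to 0 on non-l2 inputs so that
   Leibniz equality of operators is equality on H. *)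
Record Op := mkOp {
  op :> (nat -> C) -> (nat -> C);
  op_lin : linear_on op;
  op_bdd : exists M, op_bound op M;
  op_junk : forall v, ~ l2 v -> forall k, op v k = (0, 0)
}.

Definition Tup (d : nat) := Fin.t d -> Op.

Inductive natinf := NFin (n : nat) | NInf.
Definition below (l : natinf) (n : nat) : Prop :=
  match l with NFin m => (n < m)%nat | NInf => True end.

(* H^(l) is modelled as the l^2 vectors on N x N supported on {(n,k) | n < l};
   the n-th summand is k |-> w (n,k). *)
Definition supp_l (l : natinf) : nat * nat -> Prop := fun p => below l (fst p).
Definition suppH : nat -> Prop := fun _ => True.

Definition unitary {J : Type} (supp : J -> Prop) (u : (nat -> C) -> (J -> C)) : Prop :=
  linear_on u /\
  (forall v, l2 v -> l2_in supp (u v)) /\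
  (forall v c, l2 v -> (nrm2_le v c <-> nrm2_le (u v) c)) /\
  (forall w, l2_in supp w -> exists v, l2 v /\ forall j, u v j = w j).

Definition bdd_invertible {J : Type} (supp : J -> Prop) (s : (nat -> C) -> (J -> C)) : Prop :=
  linear_on s /\
  (exists M, op_bound s M) /\
  (forall v, l2 v -> l2_in supp (s v)) /\
  (forall v w, l2 v -> l2 w -> (forall j, s v j = s w j) -> forall k, v k = w k) /\
  (forall w, l2_in supp w -> exists v, l2 v /\ forall j, s v j = w j) /\
  (exists m, 0 <= m /\ forall v c, l2 v -> nrm2_le (s v) c -> nrm2_le v (m * c)).

Definition dsum {d : nat} (xs : nat -> Tup d) (i : Fin.t d)
  : (nat * nat -> C) -> (nat * nat -> C) :=
  fun w p => xs (fst p) i (fun k => w (fst p, k)) (snd p).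

Definition pair_seq {d : nat} (x y : Tup d) : nat -> Tup d :=
  fun n => match n with O => x | _ => y end.

Definition bounded_set {d : nat} (S : Tup d -> Prop) : Prop :=
  exists M, forall x, S x -> forall i, op_bound (x i) M.

Definition interior_pt {d : nat} (S : Tup d -> Prop) (x : Tup d) : Prop :=
  exists eps, 0 < eps /\
    forall y : Tup d, (forall i, op_bound (fun v k => Csub (y i v k) (x i v k)) eps) -> S y.

Definition is_NC_domain {d : nat} (Om : Tup d -> Prop) : Prop :=
  exists Omk : nat -> Tup d -> Prop,
    (forall k x, Omk k x -> Om x) /\
    (forall x, Om x -> exists k, Omk k x) /\
    (forall k x, Omk k x -> interior_pt (Omk (S k)) x) /\
    (forall k, bounded_set (Omk k)) /\
    (* unitary invariance: u^* x u in Omk k, i.e. the x' with u x' = x u *)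
    (forall k x u, Omk k x -> unitary suppH u ->
       exists x', Omk k x' /\
         forall i v, l2 v -> forall j, u (x' i v) j = x i (u v) j) /\
    (* direct sums: u^{-1} ((+)_n xs n) u in Omk k for some unitary u : H -> H^(l) *)
    (forall k (l : natinf) (xs : nat -> Tup d), l <> NFin 0 ->
       (forall n, below l n -> Omk k (xs n)) ->
       exists u, unitary (supp_l l) u /\
         exists w, Omk k w /\
           forall i v, l2 v -> forall n j, below l n ->
             u (w i v) (n, j) = dsum xs i (u v) (n, j)).

Definition is_NC_function {d r : nat} (Om : Tup d -> Prop) (f : Tup d -> Tup r) : Prop :=
  forall x y (s : (nat -> C) -> (nat * nat -> C)),
    Om x -> Om y -> bdd_invertible (supp_l (NFin 2)) s ->
    forall w, Om w ->
      (* w = s^{-1} [[x,0],[0,y]] s *)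
      (forall i v, l2 v -> forall n j, below (NFin 2) n ->
         s (w i v) (n, j) = dsum (pair_seq x y) i (s v) (n, j)) ->
      (* f w = s^{-1} [[f x,0],[0,f y]] s *)
      (forall i v, l2 v -> forall n j, below (NFin 2) n ->
         s (f w i v) (n, j) = dsum (pair_seq (f x) (f y)) i (s v) (n, j)).

(* Let u : H -> H^(2) be a unitary with u w u^-1 = diag(x, y) for some w in Om
   (it exists because Om is an NC domain), and let s = [[1,0],[L,1]] u.
   Since L x = y L, conjugating diag(x, y) by [[1,0],[L,1]] does not change it,
   so s w s^-1 = diag(x, y) too.  The NC property, applied to both u and s, makes
   f(w) conjugate to diag(f x, f y) by u and by s; hence [[1,0],[L,1]] commutes
   with diag(f x, f y), and the lower-left entry of that identity is
   L f(x) = f(y) L. *)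
From Pilot Require Import Defs.
From Stdlib Require Import Reals List.
From Stdlib Require Fin.
From Stdlib Require Import Lra Lia Psatz FunctionalExtensionality.
Open Scope R_scope.
Local Notation C := Defs.C.

Ltac Cring :=
  unfold vadd, vscal, Cadd, Cmul, Csub; cbv beta;
  apply injective_projections; cbn [fst snd]; ring.

Lemma Cnorm2_ge0 a : 0 <= Cnorm2 a.
Proof. destruct a; unfold Cnorm2; simpl; nra. Qed.

Lemma Cnorm2_0 : Cnorm2 (0, 0) = 0.
Proof. unfold Cnorm2; simpl; ring. Qed.

Lemma Cnorm2_Cmul a z : Cnorm2 (Cmul a z) = Cnorm2 a * Cnorm2 z.
Proof. destruct a, z; unfold Cnorm2, Cmul; simpl; ring. Qed.

Lemma Cnorm2_Cadd_le a b : Cnorm2 (Cadd a b) <= 2 * Cnorm2 a + 2 * Cnorm2 b.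
Proof.
  destruct a as [a1 a2], b as [b1 b2]; unfold Cnorm2, Cadd; simpl.
  pose proof (pow2_ge_0 (a1 - b1)); pose proof (pow2_ge_0 (a2 - b2)); nra.
Qed.

Lemma Cnorm2_Csub_le a b : Cnorm2 (Csub a b) <= 2 * Cnorm2 a + 2 * Cnorm2 b.
Proof.
  destruct a as [a1 a2], b as [b1 b2]; unfold Cnorm2, Csub; simpl.
  pose proof (pow2_ge_0 (a1 + b1)); pose proof (pow2_ge_0 (a2 + b2)); nra.
Qed.

Lemma Cnorm2_le_Cadd_r a b : Cnorm2 b <= 2 * Cnorm2 (Cadd a b) + 2 * Cnorm2 a.
Proof.
  destruct a as [a1 a2], b as [b1 b2]; unfold Cnorm2, Cadd; simpl.
  pose proof (pow2_ge_0 (2 * a1 + b1)); pose proof (pow2_ge_0 (2 * a2 + b2)); nra.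
Qed.

Lemma Cadd_cancel_l a b c : Cadd a b = Cadd a c -> b = c.
Proof.
  destruct a as [a1 a2], b as [b1 b2], c as [c1 c2]; unfold Cadd; simpl.
  intro E; injection E; intros; f_equal; lra.
Qed.

Lemma sumsq_le_comb {J} (F g h : J -> C) (a b : R) s :
  (forall j, Cnorm2 (F j) <= a * Cnorm2 (g j) + b * Cnorm2 (h j)) ->
  sumsq F s <= a * sumsq g s + b * sumsq h s.
Proof. intros H; induction s as [|j s IH]; simpl; [lra|]. specialize (H j). nra. Qed.

Lemma sumsq_0 {J} (g : J -> C) s : (forall j, g j = (0, 0)) -> sumsq g s = 0.
Proof.
  intro H; induction s as [|j s IH]; simpl; [reflexivity|].
  rewrite IH, H, Cnorm2_0; ring.
Qed.

Lemma nrm2_le_ge0 {J} (v : J -> C) c : nrm2_le v c -> 0 <= c.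
Proof. intro H. exact (H nil (NoDup_nil _)). Qed.

Lemma nrm2_le_0_eq {J} (v : J -> C) j : nrm2_le v 0 -> v j = (0, 0).
Proof.
  intro H; specialize (H (j :: nil) (NoDup_cons _ (@in_nil _ j) (NoDup_nil _))).
  simpl in H; destruct (v j) as [a b]; unfold Cnorm2 in H; simpl in H.
  assert (a = 0) by nra; assert (b = 0) by nra; subst; reflexivity.
Qed.

Lemma l2_0 {J} : @l2 J (fun _ => (0, 0)).
Proof. exists 0; intros s _; rewrite sumsq_0 by reflexivity; lra. Qed.

Lemma l2_lincomb {J} (a b : C) (v w : J -> C) :
  l2 v -> l2 w -> l2 (vadd (vscal a v) (vscal b w)).
Proof.
  intros [c1 H1] [c2 H2].
  exists (2 * Cnorm2 a * c1 + 2 * Cnorm2 b * c2). intros s Hs.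
  eapply Rle_trans.
  { apply (sumsq_le_comb _ v w (2 * Cnorm2 a) (2 * Cnorm2 b)); intro j.
    unfold vadd, vscal; eapply Rle_trans; [apply Cnorm2_Cadd_le|].
    rewrite !Cnorm2_Cmul; lra. }
  specialize (H1 s Hs); specialize (H2 s Hs).
  pose proof (Cnorm2_ge0 a); pose proof (Cnorm2_ge0 b); nra.
Qed.

Local Notation row g n := (fun k : nat => g (n, k)).

Definition row_emb (n : nat) (v : nat -> C) : nat * nat -> C :=
  fun p => if Nat.eqb (fst p) n then v (snd p) else (0, 0).

Lemma nrm2_le_row (g : nat * nat -> C) c n : nrm2_le g c -> nrm2_le (row g n) c.
Proof.
  intros H s Hs.
  replace (sumsq (row g n) s) with (sumsq g (map (fun k => (n, k)) s)).
  - apply H; apply NoDup_map_NoDup_ForallPairs; [|exact Hs].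
    intros a b _ _ E; injection E; auto.
  - clear Hs; induction s as [|k s IH]; simpl; [reflexivity|]; rewrite IH; reflexivity.
Qed.

Lemma l2_row (g : nat * nat -> C) n : l2 g -> l2 (row g n).
Proof. intros [c H]; exists c; apply nrm2_le_row; exact H. Qed.

Fixpoint row_indices (n : nat) (s : list (nat * nat)) : list nat :=
  match s with
  | nil => nil
  | p :: s' => if Nat.eqb (fst p) n then snd p :: row_indices n s' else row_indices n s'
  end.

Lemma in_row_indices n s k : In k (row_indices n s) -> In (n, k) s.
Proof.
  induction s as [|[a b] s IH]; simpl; [tauto|].
  destruct (Nat.eqb_spec a n); simpl; intros H.
  - destruct H as [H|H]; [left; subst; reflexivity | right; auto].
  - right; auto.
Qed.

Lemma NoDup_row_indices n s : NoDup s -> NoDup (row_indices n s).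
Proof.
  induction s as [|[a b] s IH]; simpl; intros H; [constructor|].
  inversion H; subst.
  destruct (Nat.eqb_spec a n); simpl; auto.
  constructor; auto. intro Hin; apply in_row_indices in Hin; subst; auto.
Qed.

Lemma sumsq_row_emb n v s : sumsq (row_emb n v) s = sumsq v (row_indices n s).
Proof.
  induction s as [|[a b] s IH]; simpl; [reflexivity|].
  unfold row_emb at 1; simpl.
  destruct (Nat.eqb a n); simpl; rewrite IH; [reflexivity | rewrite Cnorm2_0; ring].
Qed.

Lemma nrm2_le_row_emb n v c : nrm2_le v c -> nrm2_le (row_emb n v) c.
Proof. intros H s Hs; rewrite sumsq_row_emb; apply H, NoDup_row_indices, Hs. Qed.

Lemma l2_op (T : Op) v : l2 v -> l2 (T v).
Proof.
  intros [c Hc]. destruct (op_bdd T) as [M [_ HB]]. exists (M * M * c). apply HB, Hc.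
Qed.

Lemma op_add (T : Op) v w : l2 v -> l2 w -> forall j, T (vadd v w) j = Cadd (T v j) (T w j).
Proof.
  intros Hv Hw j. pose proof (op_lin T (1, 0) (1, 0) v w Hv Hw j) as H.
  replace (vadd (vscal (1, 0) v) (vscal (1, 0) w)) with (vadd v w) in H
    by (extensionality k; Cring).
  rewrite H; Cring.
Qed.

Lemma op_0 (T : Op) j : T (fun _ => (0, 0)) j = (0, 0).
Proof.
  pose proof (op_lin T (0, 0) (0, 0) _ _ l2_0 l2_0 j) as H.
  replace (vadd (vscal (0, 0) (fun _ : nat => (0, 0))) (vscal (0, 0) (fun _ : nat => (0, 0))))
    with (fun _ : nat => ((0, 0) : C)) in H by (extensionality k; Cring).
  rewrite H; Cring.
Qed.

Lemma op_bound_0 {J1 J2} M : 0 <= M -> @op_bound J1 J2 (fun _ _ => (0, 0)) M.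
Proof.
  intro HM; split; [exact HM|]. intros v c H s _.
  rewrite sumsq_0 by reflexivity.
  pose proof (nrm2_le_ge0 _ _ H); nra.
Qed.

Definition zero_op : Op.
Proof.
  refine (mkOp (fun _ _ => (0, 0)) _ (ex_intro _ 0 (op_bound_0 0 (Rle_refl 0))) _).
  - intros a b v w _ _ j; Cring.
  - reflexivity.
Defined.

Lemma unitary_inj {J} supp (u : (nat -> C) -> (J -> C)) v w :
  unitary supp u -> l2 v -> l2 w -> (forall j, u v j = u w j) -> forall k, v k = w k.
Proof.
  intros (Hlin & _ & Hnorm & _) Hv Hw E k.
  set (diff := vadd (vscal (1, 0) v) (vscal (-1, 0) w)).
  assert (Hdiff : l2 diff) by (apply l2_lincomb; assumption).
  assert (Hu0 : nrm2_le (u diff) 0).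
  { intros s _; rewrite sumsq_0; [lra|].
    intro j; unfold diff; rewrite Hlin, E by assumption; Cring. }
  pose proof (nrm2_le_0_eq _ k (proj2 (Hnorm diff 0 Hdiff) Hu0)) as Hk.
  unfold diff, vadd, vscal, Cadd, Cmul in Hk.
  destruct (v k) as [a1 a2], (w k) as [b1 b2]; simpl in Hk.
  injection Hk; intros; f_equal; lra.
Qed.

Definition intertwines {d} (L : Op) (x y : Tup d) : Prop :=
  forall i v, l2 v -> forall k, L (x i v) k = y i (L v) k.

(* [block_conj s w x y] says s w s^-1 = diag(x, y), i.e. s w = diag(x, y) s on H^(2). *)
Definition block_conj {d} (s : (nat -> C) -> (nat * nat -> C)) (w x y : Tup d) : Prop :=
  forall i v, l2 v -> forall n j, below (NFin 2) n ->
    s (w i v) (n, j) = dsum (pair_seq x y) i (s v) (n, j).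

Lemma interior_pt_mem {d} (S : Tup d -> Prop) z : interior_pt S z -> S z.
Proof.
  intros [eps [Heps HS]]; apply HS; intro i.
  replace (fun v k => Csub (z i v k) (z i v k)) with (fun (_ : nat -> C) (_ : nat) => ((0, 0) : C))
    by (extensionality v; extensionality k; Cring).
  apply op_bound_0; lra.
Qed.

Lemma NC_domain_block_diag {d} (Om : Tup d -> Prop) x y :
  is_NC_domain Om -> Om x -> Om y ->
  exists u w, unitary (supp_l (NFin 2)) u /\ Om w /\ block_conj u w x y.
Proof.
  intros (Omk & Hsub & Hcov & Hint & _ & _ & Hdsum) Hx Hy.
  assert (Hmono : forall m k z, Omk k z -> Omk (m + k)%nat z).
  { induction m as [|m IH]; intros k z Hz; simpl; [exact Hz|].
    apply interior_pt_mem, Hint, IH, Hz. }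
  destruct (Hcov x Hx) as [kx Hkx], (Hcov y Hy) as [ky Hky].
  destruct (Hdsum (ky + kx)%nat (NFin 2) (pair_seq x y)) as [u [Hu [w [Hw Hconj]]]].
  - discriminate.
  - intros [|n] Hn; simpl.
    + apply Hmono, Hkx.
    + rewrite Nat.add_comm; apply Hmono, Hky.
  - exists u, w; split; [exact Hu|]; split; [exact (Hsub _ _ Hw) | exact Hconj].
Qed.

Section Shear.

Variables (u : (nat -> C) -> (nat * nat -> C)) (L : Op).
Hypothesis Hu : unitary (supp_l (NFin 2)) u.

(* The map [[1,0],[L,1]] u : H -> H^(2). *)
Definition shear (v : nat -> C) (p : nat * nat) : C :=
  match p with
  | (O, j) => u v (O, j)
  | (S O, j) => Cadd (L (row (u v) O) j) (u v (1%nat, j))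
  | _ => (0, 0)
  end.

Lemma unitary_supp v n j : l2 v -> (2 <= n)%nat -> u v (n, j) = (0, 0).
Proof.
  destruct Hu as (_ & Hin & _); intros Hv Hn.
  apply (proj2 (Hin v Hv)); unfold supp_l, below; simpl; lia.
Qed.

Lemma l2_unitary_row v n : l2 v -> l2 (row (u v) n).
Proof. destruct Hu as (_ & Hin & _); intro Hv; apply l2_row, (proj1 (Hin v Hv)). Qed.

Section Bounds.

Variable ML : R.
Hypothesis HML : op_bound L ML.

Lemma nrm2_le_shear_dominated (g F : nat * nat -> C) c :
  nrm2_le g c ->
  (forall p, Cnorm2 (F p) <= 2 * Cnorm2 (g p) + 2 * Cnorm2 (row_emb 1 (L (row g O)) p)) ->
  nrm2_le F ((2 + 2 * ML * ML) * c).
Proof.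
  intros Hg HF s Hs.
  eapply Rle_trans; [apply (sumsq_le_comb _ _ _ 2 2 s HF)|].
  destruct HML as [HM HB].
  pose proof (nrm2_le_row_emb 1 _ _ (HB _ _ (nrm2_le_row g c O Hg)) s Hs).
  pose proof (Hg s Hs). nra.
Qed.

Lemma shear_bound v c : nrm2_le v c -> nrm2_le (shear v) ((2 + 2 * ML * ML) * c).
Proof.
  destruct Hu as (_ & _ & Hnorm & _); intro Hvc.
  assert (Hv : l2 v) by (exists c; exact Hvc).
  apply (nrm2_le_shear_dominated (u v)); [exact (proj1 (Hnorm v c Hv) Hvc)|].
  intros [[|[|n]] j]; cbn [shear row_emb fst snd Nat.eqb].
  - rewrite Cnorm2_0; pose proof (Cnorm2_ge0 (u v (O, j))); lra.
  - eapply Rle_trans; [apply Cnorm2_Cadd_le | lra].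
  - rewrite Cnorm2_0; pose proof (Cnorm2_ge0 (u v (S (S n), j))); lra.
Qed.

Lemma shear_inverse_bound v c :
  l2 v -> nrm2_le (shear v) c -> nrm2_le v ((2 + 2 * ML * ML) * c).
Proof.
  destruct Hu as (_ & _ & Hnorm & _); intros Hv Hs.
  apply (Hnorm v _ Hv), (nrm2_le_shear_dominated (shear v) _ _ Hs).
  intros [[|[|n]] j]; cbn [shear row_emb fst snd Nat.eqb].
  - rewrite Cnorm2_0; pose proof (Cnorm2_ge0 (u v (O, j))); lra.
  - apply Cnorm2_le_Cadd_r.
  - rewrite unitary_supp, Cnorm2_0 by (auto; lia); lra.
Qed.

Lemma shear_surjective w :
  l2_in (supp_l (NFin 2)) w -> exists v, l2 v /\ forall p, shear v p = w p.
Proof.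
  destruct Hu as (_ & _ & _ & Hsurj); intros [[c Hc] Hw].
  assert (Hzero : forall n j, (2 <= n)%nat -> w (n, j) = (0, 0)).
  { intros n j Hn; apply Hw; unfold supp_l, below; simpl; lia. }
  set (w' := fun p : nat * nat =>
    match p with
    | (O, j) => w (O, j)
    | (S O, j) => Csub (w (1%nat, j)) (L (row w O) j)
    | _ => (0, 0)
    end).
  assert (Hw' : l2_in (supp_l (NFin 2)) w').
  { split.
    - exists ((2 + 2 * ML * ML) * c); apply (nrm2_le_shear_dominated w _ _ Hc).
      intros [[|[|n]] j]; unfold w'; cbn [row_emb fst snd Nat.eqb].
      + rewrite Cnorm2_0; pose proof (Cnorm2_ge0 (w (O, j))); lra.
      + eapply Rle_trans; [apply Cnorm2_Csub_le | lra].
      + rewrite Cnorm2_0; pose proof (Cnorm2_ge0 (w (S (S n), j))); lra.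
    - intros [[|[|n]] j] Hn; unfold supp_l, below in Hn; simpl in Hn; [lia | lia | reflexivity]. }
  destruct (Hsurj w' Hw') as [v [Hv Hvw]]; exists v; split; [exact Hv|].
  intros [[|[|n]] j]; cbn [shear].
  - rewrite Hvw; reflexivity.
  - replace (row (u v) O) with (row w O) by (extensionality k; rewrite Hvw; reflexivity).
    rewrite Hvw; unfold w'; Cring.
  - symmetry; apply Hzero; lia.
Qed.

End Bounds.

Lemma shear_linear : linear_on shear.
Proof.
  destruct Hu as (Hlin & _); intros a b v w Hv Hw [[|[|n]] j]; cbn [shear].
  - apply Hlin; assumption.
  - replace (row (u (vadd (vscal a v) (vscal b w))) O)
      with (vadd (vscal a (row (u v) O)) (vscal b (row (u w) O)))
      by (extensionality k; rewrite Hlin by assumption; reflexivity).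
    rewrite (op_lin L a b _ _ (l2_unitary_row v O Hv) (l2_unitary_row w O Hw) j).
    rewrite Hlin by assumption; Cring.
  - Cring.
Qed.

Lemma shear_injective v w :
  l2 v -> l2 w -> (forall p, shear v p = shear w p) -> forall k, v k = w k.
Proof.
  intros Hv Hw E; apply (unitary_inj _ u v w Hu Hv Hw).
  assert (Hrow0 : row (u v) O = row (u w) O) by (extensionality k; exact (E (O, k))).
  intros [[|[|n]] j].
  - exact (E (O, j)).
  - pose proof (E (1%nat, j)) as E1; cbn [shear] in E1.
    rewrite Hrow0 in E1; exact (Cadd_cancel_l _ _ _ E1).
  - rewrite !unitary_supp by (auto; lia); reflexivity.
Qed.

Lemma shear_bdd_invertible : bdd_invertible (supp_l (NFin 2)) shear.
Proof.
  destruct (op_bdd L) as [ML HML].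
  assert (HK : 0 <= 2 + 2 * ML * ML) by nra.
  split; [exact shear_linear|].
  split.
  { exists (sqrt (2 + 2 * ML * ML)); split; [apply sqrt_pos|].
    intros v c H; rewrite sqrt_sqrt by exact HK; exact (shear_bound ML HML v c H). }
  split.
  { intros v [c Hc]; split.
    - exists ((2 + 2 * ML * ML) * c); exact (shear_bound ML HML v c Hc).
    - intros [[|[|n]] j] Hn; unfold supp_l, below in Hn; simpl in Hn; [lia | lia | reflexivity]. }
  split; [exact shear_injective|].
  split; [exact (shear_surjective ML HML)|].
  exists (2 + 2 * ML * ML); split; [exact HK | exact (shear_inverse_bound ML HML)].
Qed.

Lemma block_conj_shear {d} (w x y : Tup d) :
  block_conj u w x y -> intertwines L x y -> block_conj shear w x y.
Proof.
  intros Hconj HL i v Hv [|[|n]] j Hn; [| | simpl in Hn; lia].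
  - cbn [shear]; rewrite (Hconj i v Hv O j) by (simpl; lia); reflexivity.
  - cbn [shear]; unfold dsum; cbn [fst snd pair_seq].
    replace (row (u (w i v)) O) with (x i (row (u v) O))
      by (extensionality k; rewrite (Hconj i v Hv O k) by (simpl; lia); reflexivity).
    rewrite (Hconj i v Hv 1%nat j) by (simpl; lia); unfold dsum; cbn [fst snd pair_seq shear].
    change (fun k => Cadd (L (row (u v) O) k) (u v (1%nat, k)))
      with (vadd (L (row (u v) O)) (row (u v) 1%nat)).
    rewrite op_add by (try apply l2_op; apply l2_unitary_row, Hv).
    rewrite HL by (apply l2_unitary_row, Hv); reflexivity.
Qed.

(* Test on a vector v with u v = (v0, 0): row 0 of u (W v) is X v0 and row 1 is
   Y 0 = 0, so row 1 of shear (W v) = diag(X, Y) shear v reads L (X v0) = Y (L v0). *)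
Lemma intertwines_of_block_conj_shear {r} (W X Y : Tup r) :
  block_conj u W X Y -> block_conj shear W X Y -> intertwines L X Y.
Proof.
  destruct Hu as (_ & _ & _ & Hsurj); intros Hconj Hshear i v0 Hv0 k.
  assert (He : l2_in (supp_l (NFin 2)) (row_emb O v0)).
  { split.
    - destruct Hv0 as [c Hc]; exists c; apply nrm2_le_row_emb, Hc.
    - intros [n j] Hn; unfold row_emb; simpl.
      destruct (Nat.eqb_spec n O); [subst; unfold supp_l, below in Hn; simpl in Hn; lia | reflexivity]. }
  destruct (Hsurj _ He) as [v [Hv Huv]].
  assert (Hrow0 : row (u v) O = v0) by (extensionality j; rewrite Huv; reflexivity).
  assert (Hrow1 : row (u v) 1%nat = fun _ => (0, 0)) by (extensionality j; rewrite Huv; reflexivity).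
  assert (HW0 : row (u (W i v)) O = X i v0).
  { extensionality j; rewrite (Hconj i v Hv O j) by (simpl; lia).
    unfold dsum; cbn [fst snd pair_seq]; rewrite Hrow0; reflexivity. }
  assert (HW1 : u (W i v) (1%nat, k) = (0, 0)).
  { rewrite (Hconj i v Hv 1%nat k) by (simpl; lia).
    unfold dsum; cbn [fst snd pair_seq]; rewrite Hrow1; apply op_0. }
  pose proof (Hshear i v Hv 1%nat k ltac:(simpl; lia)) as H.
  unfold dsum in H; cbn [shear fst snd pair_seq] in H.
  rewrite HW0, HW1, Hrow0 in H.
  replace (fun j => Cadd (L v0 j) (u v (1%nat, j))) with (L v0) in H
    by (extensionality j; rewrite Huv; unfold row_emb; simpl; Cring).
  rewrite <- H; Cring.
Qed.

End Shear.

Lemma block_conj_shear_zero_op {d} u (w x y : Tup d) :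
  block_conj (shear u zero_op) w x y -> block_conj u w x y.
Proof.
  intros Hconj i v Hv [|[|n]] j Hn; [| | simpl in Hn; lia].
  - exact (Hconj i v Hv O j Hn).
  - pose proof (Hconj i v Hv 1%nat j Hn) as H; unfold dsum in *; cbn [shear fst snd pair_seq] in *.
    unfold zero_op in H; cbn [op] in H.
    replace (fun k => Cadd (0, 0) (u v (1%nat, k))) with (row (u v) 1%nat) in H
      by (extensionality k; Cring).
    rewrite <- H; Cring.
Qed.

Theorem mainTheorem7 (d r : nat) (Om : Tup d -> Prop) (f : Tup d -> Tup r)
  (HOm : is_NC_domain Om) (Hf : is_NC_function Om f)
  (x y : Tup d) (L : Op) (Hx : Om x) (Hy : Om y)
  (HL : forall i v, l2 v -> forall k, L (x i v) k = y i (L v) k) :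
  forall i v, l2 v -> forall k, L (f x i v) k = f y i (L v) k.
Proof.
  destruct (NC_domain_block_diag Om x y HOm Hx Hy) as [u [w [Hu [Hw Hconj]]]].
  assert (Hf_shear : forall L' : Op, intertwines L' x y ->
                       block_conj (shear u L') (f w) (f x) (f y)).
  { intros L' HL'.
    exact (Hf x y _ Hx Hy (shear_bdd_invertible u L' Hu) w Hw (block_conj_shear u L' Hu w x y Hconj HL')). }
  assert (Hzero : intertwines zero_op x y) by (intros i v Hv k; symmetry; apply op_0).
  apply (intertwines_of_block_conj_shear u L Hu (f w)).
  - exact (block_conj_shear_zero_op u _ _ _ (Hf_shear zero_op Hzero)).
  - exact (Hf_shear L HL).
Qed.
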